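(* For every positive integer $n$, \[ \sum_{j=1}^{n}\left(\binom{n}{j}+1\right)\frac{B_j}{j}\left(1-2^{j}\right)=1 . \]
   Context: $B_j$ is the $j$th Bernoulli number ($\frac{t}{e^t-1}=\sum_{m\ge0}B_m\frac{t^m}{m!}$, so $B_1=-1/2$). *)

From mathcomp Require Import all_boot all_order all_algebra.
Set Implicit Arguments. Unset Strict Implicit. Unset Printing Implicit Defensive.
Import Order.TTheory GRing.Theory Num.Theory.
Local Open Scope ring_scope.

(* Bernoulli numbers (rationals), convention t/(e^t-1) = sum B_m t^m/m!,
   so B_1 = -1/2.  Characterized by B_0 = 1 and, for m >= 1,
   sum_{k=0}^{m} C(m+1,k) B_k = 0, i.e.
   B_m = - (1/(m+1)) * sum_{k<m} C(m+1,k) B_k. *)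

Fixpoint bern_list (m : nat) : seq rat :=
  match m with
  | 0%N => [:: 1]
  | m'.+1 =>
      let s := bern_list m' in
      rcons s (- (m'.+2%:R)^-1 *
               \sum_(k < m'.+1) ('C(m'.+2, k))%:R * nth 0 s k)
  end.

Definition bernoulli (m : nat) : rat := nth 0 (bern_list m) m.

(* With the Genocchi numbers G_k = 2 (1 - 2^k) B_k the summand equals
   G_j / (2 j).  From B(t) (e^t - 1) = t one gets
   G(t) = 2 B(t) - 2 B(2t) = 2t / (e^t + 1), so G(t) (e^t + 1) = 2t; this
   identity is obtained after multiplying by e^t - 1, which can be cancelled
   since (e^t - 1) / t is invertible.  For e_m = G_(m+1) / (m+1), the
   coefficients of 2 / (e^t + 1), it reads  sum_k C(m,k) e_k + e_m = 2 [m = 0],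
   and Pascal's rule turns this into S(n+1) = S(n) + 2 [n = 0] for
   S(n) = sum_(m<n) (C(n,m+1) + 1) e_m.  Power series are truncated to
   polynomials and compared modulo X^n. *)

From mathcomp Require Import all_boot all_order all_algebra.
From mathcomp Require Import ring.
Import Order.TTheory GRing.Theory Num.Theory.
Local Open Scope ring_scope.

Section XnDivisibility.
Variable R : fieldType.

Lemma dvdp_XnP n (p : {poly R}) :
  reflect (forall i, (i < n)%N -> p`_i = 0) ('X^n %| p).
Proof.
apply: (iffP (dvdpP _ _)) => [[q ->] i lt_in | p_low].
  by rewrite coefMXn lt_in.
exists (drop_poly n p); rewrite -[LHS](poly_take_drop n) addrC.
suff -> : take_poly n p = 0 by rewrite addr0.
by apply/polyP => i; rewrite coef_take_poly coef0; case: ifP => // /p_low.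
Qed.

Lemma dvdp_XnS_cancelr n (q p : {poly R}) :
  p`_0 = 0 -> p`_1 != 0 -> 'X^(n.+1) %| q * p -> 'X^n %| q.
Proof.
move=> p0 p1; have p_def : p = drop_poly 1 p * 'X.
  rewrite -[LHS](poly_take_drop 1) expr1 -[RHS]add0r; congr (_ + _).
  by apply/polyP => -[|i]; rewrite coef_take_poly coef0.
have coprime_Xn : coprimep ('X^n) (drop_poly 1 p).
  rewrite coprimep_expl // coprimep_sym coprimepX rootE horner_coef0.
  by rewrite coef_drop_poly.
rewrite p_def mulrA exprSr dvdp_mul2r ?polyX_eq0 //.
by rewrite Gauss_dvdpl.
Qed.

End XnDivisibility.

Section TruncatedEgf.
Context {R : numFieldType} (n : nat).

Definition egf (a : nat -> R) : {poly R} := \poly_(i < n) (a i / i`!%:R).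

Definition exp_trunc (c : R) : {poly R} := egf (fun i => c ^+ i).

Lemma fact_neq0 k : k`!%:R != 0 :> R.
Proof. by rewrite pnatr_eq0 -lt0n fact_gt0. Qed.

Lemma coef_egfM a b m : (m < n)%N ->
  (egf a * egf b)`_m
  = (\sum_(k < m.+1) 'C(m, k)%:R * (a k * b (m - k)%N)) / m`!%:R.
Proof.
move=> lt_mn; rewrite coefM mulr_suml.
apply: eq_bigr => -[k /=]; rewrite ltnS => le_km _.
rewrite !coef_poly (leq_ltn_trans _ lt_mn) // (leq_ltn_trans (leq_subr k m)) //.
rewrite -(bin_fact le_km) !natrM.
have bin_neq0 : 'C(m, k)%:R != 0 :> R by rewrite pnatr_eq0 -lt0n bin_gt0.
by field; rewrite bin_neq0 !fact_neq0.
Qed.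

Lemma exp_truncM c d : 'X^n %| exp_trunc c * exp_trunc d - exp_trunc (c + d).
Proof.
apply/dvdp_XnP => m lt_mn; rewrite coefB coef_egfM // coef_poly lt_mn.
rewrite [c + d]addrC exprDn; apply/eqP; rewrite subr_eq0; apply/eqP.
congr (_ / _); apply: eq_bigr => k _.
by rewrite mulr_natl mulrC.
Qed.

End TruncatedEgf.

Lemma size_bern_list m : size (bern_list m) = m.+1.
Proof. by elim: m => //= m IH; rewrite size_rcons IH. Qed.

Lemma nth_bern_list m k : (k <= m)%N -> nth 0 (bern_list m) k = bernoulli k.
Proof.
elim: m => [|m IH] le_km; first by move: le_km; rewrite leqn0 => /eqP ->.
rewrite /= nth_rcons size_bern_list.
case: ltnP => [lt_km | ge_km]; first exact: IH.
have -> : k = m.+1 by apply/eqP; rewrite eqn_leq le_km ge_km.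
by rewrite /bernoulli /= nth_rcons size_bern_list ltnn eqxx.
Qed.

Lemma bernoulliS m : bernoulli m.+1 =
  - (m.+2%:R)^-1 * \sum_(k < m.+1) 'C(m.+2, k)%:R * bernoulli k.
Proof.
rewrite {1}/bernoulli /= nth_rcons size_bern_list ltnn eqxx.
by congr (_ * _); apply: eq_bigr => k _; rewrite nth_bern_list // -ltnS.
Qed.

Lemma sum_binom_bernoulli m :
  \sum_(k < m) 'C(m, k)%:R * bernoulli k = (m == 1)%:R.
Proof.
case: m => [|[|m]]; first by rewrite big_ord0.
  by rewrite big_ord1 bin0 mul1r.
rewrite big_ord_recr /= bernoulliS binSn mulrA mulrN mulfV ?pnatr_eq0 //.
by rewrite mulN1r addrN.
Qed.

Definition bernoulli_egf n (c : rat) : {poly rat} :=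
  egf n (fun i => c ^+ i * bernoulli i).

Lemma bernoulli_egf_exp n c :
  'X^n %| bernoulli_egf n c * (exp_trunc n c - 1) - c%:P * 'X.
Proof.
apply/dvdp_XnP => m lt_mn.
rewrite mulrBr mulr1 !coefB coef_egfM // coef_poly lt_mn coefCM coefX.
have -> : \sum_(k < m.+1) 'C(m, k)%:R * (c ^+ k * bernoulli k * c ^+ (m - k))
    = c ^+ m * (\sum_(k < m) 'C(m, k)%:R * bernoulli k + bernoulli m).
  rewrite big_ord_recr /= binn subnn mulrDr mulr_sumr.
  congr (_ + _); last first.
    by rewrite expr0 mulr1 mul1r mulrC.
  apply: eq_bigr => k _.
  by rewrite mulrAC -exprD subnKC 1?mulrCA // ltnW.
rewrite sum_binom_bernoulli.
case: (m =P 1%N) => [->|_] /=.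
  by rewrite expr1 !divr1; ring.
by rewrite add0r mulr0 subr0 subrr.
Qed.

Definition genocchi k : rat := 2 * (1 - 2 ^+ k) * bernoulli k.

Lemma egf_genocchi n :
  egf n genocchi = 2%:P * (bernoulli_egf n 1 - bernoulli_egf n 2).
Proof.
apply/polyP => i; rewrite coefCM coefB !coef_poly.
by case: ifP => _; [rewrite /genocchi expr1n; ring | rewrite subrr mulr0].
Qed.

Lemma genocchi_egf_exp n :
  'X^(n.+1) %| egf n.+2 genocchi * (exp_trunc n.+2 1 + 1) - 2%:P * 'X.
Proof.
set e := exp_trunc n.+2 1; set B1 := bernoulli_egf n.+2 1.
set B2 := bernoulli_egf n.+2 2.
apply: (@dvdp_XnS_cancelr _ _ _ (e - 1)).
- by rewrite coefB coef1 coef_poly /= fact0 divr1 subrr.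
- by rewrite coefB coef1 coef_poly.
have -> : (egf n.+2 genocchi * (e + 1) - 2%:P * 'X) * (e - 1)
    = 2%:P * ((e + 1) * (B1 * (e - 1) - 1%:P * 'X)
              - (B2 * (exp_trunc n.+2 2 - 1) - 2%:P * 'X)
              + B2 * (exp_trunc n.+2 2 - e * e)).
  by rewrite egf_genocchi -/B1 -/B2 polyC1 polyC_natr; ring.
apply: dvdp_mull; apply: dvdp_add; first apply: dvdp_sub.
- by apply: dvdp_mull; exact: bernoulli_egf_exp.
- exact: bernoulli_egf_exp.
- apply: dvdp_mull; rewrite -opprB dvdpNr -[2 : rat]/(1 + 1).
  exact: exp_truncM.
Qed.

Lemma sum_binom_genocchi m :
  \sum_(k < m.+1) 'C(m, k)%:R * genocchi k + genocchi m = 2 * (m == 1)%:R.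
Proof.
have /dvdp_XnP/(_ m (ltnSn m)) := genocchi_egf_exp m.
rewrite coefB mulrDr mulr1 coefD coef_egfM // coef_poly ltnW // coefCM coefX.
under eq_bigr => k _ do rewrite expr1n mulr1.
move/eqP; rewrite subr_eq0 -mulrDl => /eqP sum_eq.
rewrite -[LHS](divfK (@fact_neq0 rat m)) sum_eq.
by case: eqP => [->|_]; rewrite ?mulr0 ?mul0r // mulr1 divr1.
Qed.

(* The value E_m(0) of the m-th Euler polynomial, i.e. the m-th coefficient
   of 2 / (e^t + 1) = G(t) / t. *)
Definition euler0 m : rat := genocchi m.+1 / m.+1%:R.

Lemma sum_binom_euler0 m :
  \sum_(k < m.+1) 'C(m, k)%:R * euler0 k + euler0 m = 2 * (m == 0)%:R.
Proof.
have m1_neq0 : m.+1%:R != 0 :> rat by rewrite pnatr_eq0.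
have binS_genocchi k : 'C(m.+1, k.+1)%:R * genocchi k.+1
    = m.+1%:R * ('C(m, k)%:R * euler0 k).
  have k1_neq0 : k.+1%:R != 0 :> rat by rewrite pnatr_eq0.
  rewrite /euler0 mulrA -natrM mul_bin_diag natrM [RHS]mulrAC.
  by rewrite [k.+1%:R * _]mulrC divfK // mulrC.
have genocchiS : genocchi m.+1 = m.+1%:R * euler0 m.
  by rewrite /euler0 mulrC divfK.
have := sum_binom_genocchi m.+1.
rewrite big_ord_recl {1}/genocchi expr0 subrr mulr0 add0r.
under eq_bigr => k _ do rewrite lift0 binS_genocchi.
rewrite -mulr_sumr genocchiS -mulrDr.
case: m m1_neq0 {binS_genocchi genocchiS} => [|m] m1_neq0 /=.
  by rewrite mul1r.
by rewrite mulr0 => /eqP; rewrite mulf_eq0 (negPf m1_neq0) => /eqP.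
Qed.

Lemma sum_binomS_euler0 n :
  \sum_(m < n) ('C(n, m.+1)%:R + 1) * euler0 m = 2 * (0 < n)%:R.
Proof.
elim: n => [|n IH]; first by rewrite big_ord0 mulr0.
have -> : \sum_(m < n.+1) ('C(n.+1, m.+1)%:R + 1) * euler0 m
    = \sum_(m < n.+1) ('C(n, m.+1)%:R + 1) * euler0 m
      + \sum_(m < n.+1) 'C(n, m)%:R * euler0 m.
  by rewrite -big_split; apply: eq_bigr => m _ /=; rewrite binS natrD; ring.
rewrite big_ord_recr /= bin_small // add0r mul1r IH -addrA (addrC (euler0 n)).
rewrite sum_binom_euler0.
by case: n {IH} => [|n] /=; rewrite ?mulr0 ?addr0 ?add0r.
Qed.

Theorem corollary2 (n : nat) : (0 < n)%N ->
  \sum_(1 <= j < n.+1) (('C(n, j))%:R + 1) * (bernoulli j / j%:R)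
                        * (1 - 2 ^+ j) = 1 :> rat.
Proof.
case: n => // n _; rewrite big_add1 /= big_mkord.
have euler0_term j : ('C(n.+1, j.+1)%:R + 1) * (bernoulli j.+1 / j.+1%:R)
    * (1 - 2 ^+ j.+1) = ('C(n.+1, j.+1)%:R + 1) * euler0 j / 2.
  by rewrite /euler0 /genocchi; field; rewrite addrC natr1 pnatr_eq0.
under eq_bigr => j _ do rewrite euler0_term.
by rewrite -mulr_suml sum_binomS_euler0 mulr1 divff.
Qed.
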